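(* For every $p\ge0$, $m,n\ge0$ with $m+n\ge1$, and $k_1,\dots,k_m,\ell_1,\dots,\ell_n\ge0$, the open correlator $\langle\tau_{k_1}\cdots\tau_{k_m}\sigma_{\ell_1}\cdots\sigma_{\ell_n}\rangle^o_p$ vanishes unless $$k_1+\dots+k_m+\ell_1+\dots+\ell_n-m-\frac n2=\frac32(p-1).$$ Equivalently, for all $p\ge0$, $\sum_{k\ge0}\big((k-1)t_k\partial_{t_k}+(k-\tfrac12)s_k\partial_{s_k}\big)\mathcal F^o_p=\tfrac32(p-1)\mathcal F^o_p$.
   Context: The Burgers–KdV differential polynomials: $K_0=w$, $R_0=\rho$, $Q_0=w+\frac{\rho^2}2+\frac\epsilon2\rho_x$, $\partial_xK_n=\frac2{2n+1}(w\partial_x+\frac12w_x+\frac{\epsilon^2}8\partial_x^3)K_{n-1}$ (zero integration constant), $R_n=\frac2{2n+1}\big((w+\frac{\rho^2}2+\epsilon(\frac{\rho_x}2+\rho\partial_x)+\frac{\epsilon^2}2\partial_x^2)R_{n-1}+(\frac\rho2+\frac34\epsilon\partial_x)K_{n-1}\big)$, $Q_n=\frac1{n+1}(w+\frac{\rho^2}2+\epsilon(\frac{\rho_x}2+\rho\partial_x)+\frac{\epsilon^2}2\partial_x^2)Q_{n-1}$. Let $(w_{\rm top},\rho_{\rm top})$ solve $\partial_{t_n}w=\partial_xK_n$, $\partial_{t_n}\rho=\partial_xR_n$, $\partial_{s_n}w=0$, $\partial_{s_n}\rho=\partial_xQ_n$ ($t_0=x$) with $(w,\rho)|_{t_n=x\delta_{n,0},s=0}=(x,0)$,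 and let $\log\tau_2=\sum_{p\ge0}\epsilon^{p-1}\mathcal F^o_p(\mathbf t,\mathbf s)$ be defined by $\epsilon\partial_{t_n}\log\tau_2=R_n(w_{\rm top},\rho_{\rm top};\epsilon)$, $\epsilon\partial_{s_n}\log\tau_2=Q_n(w_{\rm top},\rho_{\rm top};\epsilon)$, normalized by $\mathcal F^o_p(\mathbf 0,\mathbf 0)=0$. The open correlators are the Taylor coefficients $\mathcal F^o_p=\sum_{m,n\ge0}\sum_{k_i,\ell_j\ge0}\frac{\langle\tau_{k_1}\cdots\tau_{k_m}\sigma_{\ell_1}\cdots\sigma_{\ell_n}\rangle^o_p}{m!\,n!}t_{k_1}\cdots t_{k_m}s_{\ell_1}\cdots s_{\ell_n}$ (symmetric in the $\tau$'s and in the $\sigma$'s). *)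

From mathcomp Require Import all_boot all_order all_algebra.
Set Implicit Arguments. Unset Strict Implicit. Unset Printing Implicit Defensive.
Import Order.TTheory GRing.Theory Num.Theory.
Local Open Scope ring_scope.

(* Monomials in countably many variables X_0, X_1, ... : an exponent  *)
(* sequence m (exponent of X_i is nth 0 m i).  Trailing zeros are      *)
(* irrelevant; mtrim removes them (canonical representative).          *)
Fixpoint mtrim (m : seq nat) : seq nat :=
  if m is x :: s then
    let t := mtrim s in if (x == 0%N) && (t == [::]) then [::] else x :: t
  else [::].

Fixpoint mdivs (m : seq nat) : seq (seq nat) :=
  if m is x :: s then [seq i :: a | i <- iota 0 x.+1, a <- mdivs s]
  else [:: [::]].

Definition msub (m a : seq nat) : seq nat := [seq (x.1 - x.2)%N | x <- zip m a].
Definition madd (m a : seq nat) : seq nat :=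
  mkseq (fun i => (nth 0 m i + nth 0 a i)%N) (maxn (size m) (size a)).
Definition mvar (i : nat) : seq nat := incr_nth [::] i.

(* Formal power series over Q in X_0, X_1, ...: coefficient functions. *)
(* Only values at trimmed monomials are ever read.                     *)
Definition ps := seq nat -> rat.
Definition ps_eq (f g : ps) : Prop := forall m, f (mtrim m) = g (mtrim m).
Definition ps_const (c : rat) : ps := fun m => if mtrim m == [::] then c else 0.
Definition ps_var (i : nat) : ps := fun m => if mtrim m == mvar i then 1 else 0.
Definition ps_add (f g : ps) : ps := fun m => f (mtrim m) + g (mtrim m).
Definition ps_scale (c : rat) (f : ps) : ps := fun m => c * f (mtrim m).
Definition ps_mul (f g : ps) : ps := fun m =>
  \sum_(a <- mdivs (mtrim m)) f (mtrim a) * g (mtrim (msub (mtrim m) a)).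
Definition ps_pow (f : ps) (n : nat) : ps := iter n (ps_mul f) (ps_const 1).
Definition ps_deriv (i : nat) (f : ps) : ps := fun m =>
  (nth 0 (mtrim m) i).+1%:R * f (mtrim (incr_nth (mtrim m) i)).

(* Variables of the (t,s,eps) series: eps = X_0, t_k = X_(2k+1), s_k = X_(2k+2).
   Jet variables of differential polynomials: eps = X_0,
   w^(i) = d_x^i w = X_(2i+1), rho^(i) = d_x^i rho = X_(2i+2). *)
Definition veps : nat := 0.
Definition vt (k : nat) : nat := (2 * k + 1)%N.
Definition vs (k : nat) : nat := (2 * k + 2)%N.
Definition vw (i : nat) : nat := (2 * i + 1)%N.
Definition vrho (i : nat) : nat := (2 * i + 2)%N.

(* Differential polynomials in w, rho with coefficients in Q[eps]:     *)
(* finite lists of terms (coefficient, monomial in the jet variables). *)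
Definition dpoly := seq (rat * seq nat).
Definition dp_coef (P : dpoly) (m : seq nat) : rat :=
  \sum_(x <- P | mtrim x.2 == mtrim m) x.1.
Definition dp_eq (P Q : dpoly) : Prop := forall m, dp_coef P m = dp_coef Q m.
Definition dp_const (c : rat) : dpoly := [:: (c, [::])].
Definition dp_var (i : nat) : dpoly := [:: (1, mvar i)].
Definition dp_add (P Q : dpoly) : dpoly := P ++ Q.
Definition dp_scale (c : rat) (P : dpoly) : dpoly := [seq (c * x.1, x.2) | x <- P].
Definition dp_mul (P Q : dpoly) : dpoly :=
  [seq (x.1 * y.1, madd x.2 y.2) | x <- P, y <- Q].
Definition dp_eps : dpoly := dp_var veps.
Definition dp_w : dpoly := dp_var (vw 0).
Definition dp_rho : dpoly := dp_var (vrho 0).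
Definition dp_rhox : dpoly := dp_var (vrho 1).
Definition dp_wx : dpoly := dp_var (vw 1).

(* total x-derivative d_x = sum_i (w^(i+1) d/dw^(i) + rho^(i+1) d/drho^(i));
   jet variable X_v (v >= 1) is sent to X_(v+2); eps is a constant. *)
Definition dp_D_term (x : rat * seq nat) : dpoly :=
  [seq ((nth 0 x.2 v)%:R * x.1,
        incr_nth (set_nth 0 x.2 v (nth 0 x.2 v).-1) v.+2)
  | v <- iota 1 (size x.2)].
Definition dp_D (P : dpoly) : dpoly := flatten (map dp_D_term P).

Definition dp_L (f : dpoly) : dpoly :=
  dp_add (dp_mul dp_w f)
 (dp_add (dp_scale (1/2) (dp_mul (dp_mul dp_rho dp_rho) f))
 (dp_add (dp_scale (1/2) (dp_mul dp_eps (dp_mul dp_rhox f)))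
 (dp_add (dp_mul dp_eps (dp_mul dp_rho (dp_D f)))
         (dp_scale (1/2) (dp_mul (dp_mul dp_eps dp_eps) (dp_D (dp_D f))))))).

Definition dp_KdVop (f : dpoly) : dpoly :=
  dp_add (dp_mul dp_w (dp_D f))
 (dp_add (dp_scale (1/2) (dp_mul dp_wx f))
         (dp_scale (1/8) (dp_mul (dp_mul dp_eps dp_eps) (dp_D (dp_D (dp_D f)))))).

(* K : the KdV differential polynomials K_n, characterised by K_0 = w,
   d_x K_n = 2/(2n+1) (w d_x + w_x/2 + eps^2/8 d_x^3) K_(n-1), and zero
   integration constant (no term free of jet variables). *)
Definition KdV_family (K : nat -> dpoly) : Prop :=
  dp_eq (K 0%N) dp_w /\
  (forall n, dp_eq (dp_D (K n.+1))
                   (dp_scale (2 / (2 * n.+1 + 1)%:R) (dp_KdVop (K n)))) /\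
  (forall n m, (forall v, (0 < v)%N -> nth 0%N m v = 0%N) -> dp_coef (K n) m = 0).

Fixpoint dp_R (K : nat -> dpoly) (n : nat) : dpoly :=
  if n is n'.+1 then
    dp_scale (2 / (2 * n + 1)%:R)
      (dp_add (dp_L (dp_R K n'))
              (dp_add (dp_scale (1/2) (dp_mul dp_rho (K n')))
                      (dp_scale (3/4) (dp_mul dp_eps (dp_D (K n'))))))
  else dp_rho.
Fixpoint dp_Q (n : nat) : dpoly :=
  if n is n'.+1 then dp_scale (1 / (n + 1)%:R) (dp_L (dp_Q n'))
  else dp_add dp_w (dp_add (dp_scale (1/2) (dp_mul dp_rho dp_rho))
                           (dp_scale (1/2) (dp_mul dp_eps dp_rhox))).

(* Evaluation of a differential polynomial at series (w, rho) in       *)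
(* (t, s, eps), with x = t_0, i.e. d_x = d/dt_0.                        *)
Definition jet (w r : ps) (v : nat) : ps :=
  if v == 0%N then ps_var veps
  else if odd v then iter (v.-1)./2 (ps_deriv (vt 0)) w
  else iter (v.-2)./2 (ps_deriv (vt 0)) r.
Definition dp_eval (w r : ps) (P : dpoly) : ps :=
  foldr (fun x acc => ps_add acc
          (ps_scale x.1 (foldr (fun v a => ps_mul a (ps_pow (jet w r v) (nth 0%N x.2 v)))
                               (ps_const 1) (iota 0 (size x.2)))))
        (ps_const 0) P.

(* G = eps log tau_2 = sum_p eps^p F^o_p  (a series in t, s, eps).      *)
Definition only_t0_eps (m : seq nat) : Prop :=
  forall v, v <> veps -> v <> vt 0 -> nth 0%N m v = 0%N.

Definition open_topological (K : nat -> dpoly) (w r G : ps) : Prop :=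
  (forall n, ps_eq (ps_deriv (vt n) w) (ps_deriv (vt 0) (dp_eval w r (K n)))) /\
  (forall n, ps_eq (ps_deriv (vt n) r) (ps_deriv (vt 0) (dp_eval w r (dp_R K n)))) /\
  (forall n, ps_eq (ps_deriv (vs n) w) (ps_const 0)) /\
  (forall n, ps_eq (ps_deriv (vs n) r) (ps_deriv (vt 0) (dp_eval w r (dp_Q n)))) /\
  (* initial condition (w, rho)|_{t_n = x delta_{n,0}, s = 0} = (x, 0) *)
  (forall m, only_t0_eps m -> w (mtrim m) = ps_var (vt 0) (mtrim m)
                           /\ r (mtrim m) = 0) /\
  (* eps d_{t_n} log tau_2 = R_n,  eps d_{s_n} log tau_2 = Q_n *)
  (forall n, ps_eq (ps_deriv (vt n) G) (dp_eval w r (dp_R K n))) /\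
  (forall n, ps_eq (ps_deriv (vs n) G) (dp_eval w r (dp_Q n))) /\
  (* normalisation F^o_p(0,0) = 0 for all p  (eps^p has monomial [:: p]) *)
  (forall p, G (mtrim [:: p]) = 0).

Definition Fo (G : ps) (p : nat) : ps := fun m =>
  if nth 0%N m veps == 0%N then G (mtrim (set_nth 0%N m veps p)) else 0.

Definition open_corr (G : ps) (p : nat) (ks ls : seq nat) : rat :=
  (foldr (fun k f => ps_deriv (vt k) f)
         (foldr (fun l f => ps_deriv (vs l) f) (Fo G p) ls) ks) [::].

From mathcomp Require Import all_boot all_order all_algebra.
From mathcomp Require Import zify ring lra.
Set Implicit Arguments. Unset Strict Implicit. Unset Printing Implicit Defensive.
Import Order.TTheory GRing.Theory Num.Theory.
Local Open Scope ring_scope.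

(* Weight the variables so that [d_x] raises weights by [2],
   [w] has weight [-2] and [rho] weight [-1].  Then [R_n] and [Q_n] are homogeneous
   of weights [-2n-1] and [-2n-2] by their recursions, and so is [K_n] (weight
   [-2n-2]): it is only known through [d_x K_n], but [d_x] kills nothing except
   the constants [Q[eps]], which [K_n] does not contain.  By induction on the
   number of variables other than [eps] and [t_0 = x], the flows together with
   the initial value [(w, rho) = (x, 0)] show that the topological solution is
   homogeneous of weights [-2] and [-1]; the equations for [log tau_2] then give
   [eps log tau_2] weight [-3].  The correlator is a multiple of the coefficient
   of [eps^p t_k1 ... t_km s_l1 ... s_ln], of weight
   [-3p + sum (2 k_i - 2) + sum (2 l_j - 1)], so it vanishes unless that is [-3]. *)

Lemma nth_mtrim s i : nth 0%N (mtrim s) i = nth 0%N s i.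
Proof.
elim: s i => [|x s IH] i //=.
case: ifP => [/andP[/eqP-> /eqP E] | _]; last by case: i.
by case: i => [|i] //=; rewrite -IH E nth_nil.
Qed.

Lemma mtrim_eq0 s : (forall i, nth 0%N s i = 0%N) -> mtrim s = [::].
Proof.
elim: s => [|x s IH] //= H.
have -> : x = 0%N := H 0%N.
by rewrite IH // => i; exact: (H i.+1).
Qed.

Lemma eq_mtrim s t : (forall i, nth 0%N s i = nth 0%N t i) -> mtrim s = mtrim t.
Proof.
elim: s t => [|x s IH] [|y t] H //.
- by rewrite [RHS]mtrim_eq0 // => i; rewrite -H nth_nil.
- by rewrite mtrim_eq0 // => i; rewrite H nth_nil.
- by rewrite /= [x](H 0%N) (IH t) // => i; exact: (H i.+1).
Qed.

Lemma mtrimK s : mtrim (mtrim s) = mtrim s.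
Proof. by apply: eq_mtrim => i; rewrite nth_mtrim. Qed.

Lemma mtrim_eqP s t : mtrim s = mtrim t <-> (forall i, nth 0%N s i = nth 0%N t i).
Proof. by split=> [E i|]; [rewrite -nth_mtrim E nth_mtrim | exact: eq_mtrim]. Qed.

Lemma size_mtrim s : (size (mtrim s) <= size s)%N.
Proof. by elim: s => [|x s IH] //=; case: ifP. Qed.

Lemma nth_last_mtrim s : mtrim s != [::] ->
  (0 < nth 0%N (mtrim s) (size (mtrim s)).-1)%N.
Proof.
elim: s => [|x s IH] //=; have [->|Hs] := eqVneq (mtrim s) [::].
  by rewrite andbT; case: x.
by rewrite andbF /=; case: (mtrim s) Hs IH.
Qed.

Lemma nth_mvar i j : nth 0%N (mvar i) j = (i == j) :> nat.
Proof. by rewrite /mvar nth_incr_nth nth_nil addn0. Qed.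

Lemma nth_madd a b i : nth 0%N (madd a b) i = (nth 0%N a i + nth 0%N b i)%N.
Proof.
rewrite /madd; case: (ltnP i (maxn (size a) (size b))) => Hi; first by rewrite nth_mkseq.
by rewrite !nth_default ?size_mkseq // (leq_trans _ Hi) // ?leq_maxl ?leq_maxr.
Qed.

Lemma exists_pos_nth m k :
  (exists2 j, (k <= j)%N & (0 < nth 0%N m j)%N) \/ (forall j, (k <= j)%N -> nth 0%N m j = 0%N).
Proof.
have [/hasP [j _ /andP[Hk Hj]]|/hasPn H] :=
  boolP (has (fun j => (k <= j)%N && (0 < nth 0%N m j)%N) (iota 0 (size m))).
  by left; exists j.
right=> j Hk; case: (ltnP j (size m)) => Hj; last by rewrite nth_default.
by move: (H j); rewrite mem_iota Hj Hk lt0n negbK => /(_ isT)/eqP.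
Qed.

Section MonomialFunctional.
Variables (V : nmodType) (c : nat -> V).

Definition mlin (s : seq nat) : V := \sum_(0 <= i < size s) c i *+ nth 0%N s i.

Lemma mlin_widen s N : (size s <= N)%N -> mlin s = \sum_(0 <= i < N) c i *+ nth 0%N s i.
Proof.
move=> HN; rewrite /mlin /index_iota !subn0 -(subnKC HN) iotaD big_cat /=.
rewrite [X in _ + X]big1_seq ?addr0 // => i /andP[_].
by rewrite mem_iota add0n => /andP[Hi _]; rewrite nth_default.
Qed.

Lemma mlinD a b m : (forall i, nth 0%N a i + nth 0%N b i = nth 0%N m i)%N ->
  mlin a + mlin b = mlin m.
Proof.
move=> H; pose N := maxn (size a) (maxn (size b) (size m)).
rewrite (@mlin_widen a N) ?leq_maxl // (@mlin_widen b N); last first.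
  by rewrite (leq_trans (leq_maxl _ (size m))) ?leq_maxr.
rewrite (@mlin_widen m N); last by rewrite (leq_trans (leq_maxr (size b) _)) ?leq_maxr.
by rewrite -big_split; apply: eq_bigr => i _; rewrite -H mulrnDr.
Qed.

Lemma mlin_nil : mlin [::] = 0.
Proof. by rewrite /mlin big_nil. Qed.

Lemma eq_mlin a b : (forall i, nth 0%N a i = nth 0%N b i) -> mlin a = mlin b.
Proof. by move=> H; rewrite -[mlin a]addr0 -mlin_nil; apply: mlinD => i; rewrite nth_nil addn0. Qed.

Lemma mlin_mtrim s : mlin (mtrim s) = mlin s.
Proof. by apply: eq_mlin => i; rewrite nth_mtrim. Qed.

Lemma mlin_mvar i : mlin (mvar i) = c i.
Proof.
rewrite (@mlin_widen _ i.+1); last by rewrite size_incr_nth /= ltnS leqnn.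
rewrite (bigD1_seq i) ?iota_uniq ?mem_iota //= nth_mvar eqxx big1 ?addr0 // => j /negbTE.
by rewrite nth_mvar eq_sym => ->.
Qed.

Lemma mlin_incr_nth s i : mlin (incr_nth s i) = mlin s + c i.
Proof. by rewrite -mlin_mvar; symmetry; apply: mlinD => j; rewrite nth_mvar nth_incr_nth addnC. Qed.

Lemma mlin_madd a b : mlin (madd a b) = mlin a + mlin b.
Proof. by symmetry; apply: mlinD => i; rewrite nth_madd. Qed.

End MonomialFunctional.

(* [X_i] has weight [i - 3]: [eps] has weight [-3], [t_k] has [2k - 2] and [s_k]
   has [2k - 1]; likewise [w^(i)] has [2i - 2] and [rho^(i)] has [2i - 1].
   [mdeg] counts the variables other than [eps] and [t_0 = x]. *)
Definition mwt : seq nat -> int := mlin (fun i => i%:Z - 3).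
Definition mdeg : seq nat -> nat := mlin (fun i => (2 <= i)%N : nat).

Lemma mwt_mtrim s : mwt (mtrim s) = mwt s. Proof. exact: mlin_mtrim. Qed.

Lemma mwt_madd a b : mwt (madd a b) = mwt a + mwt b. Proof. exact: mlin_madd. Qed.

Lemma mwt_incr_nth s i : mwt (incr_nth s i) = mwt s + (i%:Z - 3).
Proof. exact: mlin_incr_nth. Qed.

Definition mdec (m : seq nat) (j : nat) : seq nat :=
  set_nth 0%N (mtrim m) j (nth 0%N m j).-1.

Lemma nth_mdec m j i :
  nth 0%N (mdec m j) i = if i == j then (nth 0%N m j).-1 else nth 0%N m i.
Proof. by rewrite /mdec nth_set_nth /= nth_mtrim. Qed.

Lemma mtrim_incr_mdec m j :
  (0 < nth 0%N m j)%N -> mtrim (incr_nth (mtrim (mdec m j)) j) = mtrim m.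
Proof.
move=> Hj; apply: eq_mtrim => i; rewrite nth_incr_nth nth_mtrim nth_mdec eq_sym.
by case: eqP => [->|_]; rewrite ?add1n ?prednK.
Qed.

Lemma mlin_mdec (V : nmodType) (c : nat -> V) m j :
  (0 < nth 0%N m j)%N -> mlin c m = mlin c (mdec m j) + c j.
Proof.
move=> Hj; rewrite -mlin_incr_nth -[mlin c m]mlin_mtrim -(mtrim_incr_mdec Hj) mlin_mtrim.
by apply: eq_mlin => i; rewrite !nth_incr_nth nth_mtrim.
Qed.

Lemma mwt_mdec m j : (0 < nth 0%N m j)%N -> mwt m = mwt (mdec m j) + (j%:Z - 3).
Proof. exact: mlin_mdec. Qed.

Lemma mdeg_mdec m j : (2 <= j)%N -> (0 < nth 0%N m j)%N -> mdeg m = (mdeg (mdec m j)).+1.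
Proof. by move=> j2 Hj; rewrite /mdeg (mlin_mdec _ Hj) j2; exact: addn1. Qed.

Lemma mdeg_eq0 m : mdeg m = 0%N -> forall j, (2 <= j)%N -> nth 0%N m j = 0%N.
Proof. by move=> m0 j j2; case: (posnP (nth 0%N m j)) => // /(mdeg_mdec j2); rewrite m0. Qed.

Lemma mdeg_neq0 m : mdeg m != 0%N -> exists2 j, (2 <= j)%N & (0 < nth 0%N m j)%N.
Proof.
case: (exists_pos_nth m 2) => [//|m0]; rewrite /mdeg /mlin big1 // => i _.
by have [/m0->|] := leqP 2 i; rewrite ?mulr0n ?mul0rn.
Qed.

Lemma mdivsP m b : b \in mdivs m ->
  size b = size m /\ forall i, (nth 0%N b i <= nth 0%N m i)%N.
Proof.
elim: m b => [|x m IH] b; first by rewrite inE => /eqP->; split=> // i; rewrite nth_nil.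
case/allpairsP => [[i a] [Hi /IH[Ha Hna] ->]]; split; first by rewrite /= Ha.
by move: Hi; rewrite mem_iota add0n ltnS => /andP[_ Hi] [|j] //=; exact: Hna.
Qed.

Lemma mdivs_refl m : m \in mdivs m.
Proof.
elim: m => [|x m IH]; first by rewrite inE.
by apply: (@allpairs_f _ _ _ (fun i a => i :: a)); rewrite // mem_iota add0n ltnSn.
Qed.

Lemma mdivs_uniq m : uniq (mdivs m).
Proof.
elim: m => [|x m IH] //; apply: allpairs_uniq; rewrite ?iota_uniq //.
by move=> [i a] [j b] _ _ /= [-> ->].
Qed.

Lemma nth_msub m b i : size b = size m ->
  nth 0%N (msub m b) i = (nth 0%N m i - nth 0%N b i)%N.
Proof.
move=> Hs; rewrite /msub; case: (ltnP i (size m)) => Hi.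
  by rewrite (nth_map (0%N, 0%N)) ?size_zip ?Hs ?minnn // nth_zip.
by rewrite !nth_default ?size_map ?size_zip ?Hs ?minnn.
Qed.

Lemma nth_mdivs_msub m b i : b \in mdivs m ->
  (nth 0%N b i + nth 0%N (msub m b) i)%N = nth 0%N m i.
Proof. by case/mdivsP => Hs Hn; rewrite nth_msub // subnKC. Qed.

Lemma sumr_neq0 (T : eqType) (V : nmodType) (r : seq T) (F : T -> V) :
  \sum_(x <- r) F x != 0 -> exists2 x, x \in r & F x != 0.
Proof.
elim: r => [|y r IH]; first by rewrite big_nil eqxx.
rewrite big_cons; have [->|Fy _] := eqVneq (F y) 0; last by exists y; rewrite ?mem_head.
by rewrite add0r => /IH[x Hx Fx]; exists x; rewrite ?inE ?Hx ?orbT.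
Qed.

Lemma ps_mulr1 f m : ps_mul f (ps_const 1) (mtrim m) = f (mtrim m).
Proof.
rewrite /ps_mul /ps_const mtrimK (bigD1_seq (mtrim m)) ?mdivs_refl ?mdivs_uniq //=.
have -> : mtrim (msub (mtrim m) (mtrim m)) = [::].
  by apply: mtrim_eq0 => i; rewrite nth_msub // subnn.
rewrite eqxx mulr1 mtrimK big1_seq ?addr0 // => b /andP[Hb Hbm].
case: ifP => [/eqP|]; last by rewrite mulr0.
rewrite mtrimK => Hsub.
case/negP: Hb; have [Hs _] := mdivsP Hbm; apply/eqP/(@eq_from_nth _ 0%N) => // i _.
by rewrite -(nth_mdivs_msub i Hbm) -[nth _ (msub _ _) _]nth_mtrim Hsub nth_nil addn0.
Qed.

Definition ps_homog (d : nat) (c : int) (f : ps) : Prop :=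
  forall m, (mdeg m <= d)%N -> f (mtrim m) != 0 -> mwt m = c.

Lemma ps_homog_const d a : ps_homog d 0 (ps_const a).
Proof.
move=> m _; rewrite /ps_const mtrimK; case: ifP => [/eqP E _|]; last by rewrite eqxx.
by rewrite /mwt -mlin_mtrim E mlin_nil.
Qed.

Lemma ps_homog_var d i : ps_homog d (i%:Z - 3) (ps_var i).
Proof.
move=> m _; rewrite /ps_var mtrimK; case: ifP => [/eqP E _|]; last by rewrite eqxx.
by rewrite /mwt -mlin_mtrim E mlin_mvar.
Qed.

(* [mdeg] is additive and nonnegative, so both factors of a nonzero product
   coefficient again have degree at most [d]. *)
Lemma ps_homog_mul d a b f g :
  ps_homog d a f -> ps_homog d b g -> ps_homog d (a + b) (ps_mul f g).
Proof.
move=> Hf Hg m Hm; rewrite /ps_mul mtrimK => /sumr_neq0 [x Hx].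
set y := msub (mtrim m) x.
have [->|Hfx] := eqVneq (f (mtrim x)) 0; first by rewrite mul0r eqxx.
have [->|Hgy _] := eqVneq (g (mtrim y)) 0; first by rewrite mulr0 eqxx.
have Hsplit i : (nth 0%N x i + nth 0%N y i)%N = nth 0%N m i.
  by rewrite nth_mdivs_msub // nth_mtrim.
have Hdeg : (mdeg x + mdeg y)%N = mdeg m := mlinD _ Hsplit.
have Hwt : mwt x + mwt y = mwt m := mlinD _ Hsplit.
by rewrite -Hwt (Hf x) ?(Hg y) // (leq_trans _ Hm) // -Hdeg ?leq_addl ?leq_addr.
Qed.

Lemma ps_homog_pow d a f n : ps_homog d a f -> ps_homog d (a *+ n) (ps_pow f n).
Proof.
by move=> Hf; elim: n => [|n IH] /=; [apply: ps_homog_const | rewrite mulrS; apply: ps_homog_mul].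
Qed.

Lemma ps_homog_deriv_t0 d c f : ps_homog d c f -> ps_homog d (c + 2) (ps_deriv (vt 0) f).
Proof.
move=> Hf m Hm; rewrite /ps_deriv mtrimK; set m1 := incr_nth (mtrim m) (vt 0).
have [->|Hf1 _] := eqVneq (f (mtrim m1)) 0; first by rewrite mulr0 eqxx.
have Hdeg : mdeg m1 = mdeg m by rewrite /mdeg mlin_incr_nth mlin_mtrim; exact: addn0.
have Hwt : mwt m1 = mwt m - 2 by rewrite /mwt mlin_incr_nth mlin_mtrim.
by move: (Hf m1); rewrite Hdeg Hwt => /(_ Hm Hf1) <-; rewrite subrK.
Qed.

Lemma ps_homog_iter_deriv_t0 d c f k :
  ps_homog d c f -> ps_homog d (c + 2 * k%:Z) (iter k (ps_deriv (vt 0)) f).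
Proof.
move=> Hf; elim: k => [|k IH] /=; first by rewrite mulr0 addr0.
by rewrite intS (_ : _ + _ = c + 2 * k%:Z + 2); [exact: ps_homog_deriv_t0 | ring].
Qed.

Lemma vt_double k : vt k = k.*2.+1.
Proof. by rewrite /vt -muln2 mulnC addn1. Qed.

Lemma vs_double k : vs k = k.*2.+2.
Proof. by rewrite /vs -muln2 mulnC addn2. Qed.

Lemma vt_weight k : (vt k)%:Z - 3 = 2 * k%:Z - 2.
Proof. by rewrite /vt PoszD PoszM; ring. Qed.

Lemma vs_weight k : (vs k)%:Z - 3 = 2 * k%:Z - 1.
Proof. by rewrite /vs PoszD PoszM; ring. Qed.

Lemma var_cases v : v = veps \/ (exists k, v = vt k) \/ (exists k, v = vs k).
Proof.
case: v => [|v]; [by left | right]; rewrite -[v]odd_double_half.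
by case: (odd v); [right | left]; exists v./2; rewrite ?vt_double ?vs_double.
Qed.

Lemma jet_vt w r k : jet w r (vt k) = iter k (ps_deriv (vt 0)) w.
Proof. by rewrite /jet vt_double /= odd_double /= half_double. Qed.

Lemma jet_vs w r k : jet w r (vs k) = iter k (ps_deriv (vt 0)) r.
Proof. by rewrite /jet vs_double /= odd_double /= half_double. Qed.

Lemma ps_homog_jet d w r v :
  ps_homog d (-2) w -> ps_homog d (-1) r -> ps_homog d (v%:Z - 3) (jet w r v).
Proof.
move=> Hw Hr; case: (var_cases v) => [->|[[k ->]|[k ->]]]; first exact: ps_homog_var.
- rewrite jet_vt vt_weight (_ : _ - 2 = -2 + 2 * k%:Z); last by ring.
  exact: ps_homog_iter_deriv_t0.
- rewrite jet_vs vs_weight (_ : _ - 1 = -1 + 2 * k%:Z); last by ring.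
  exact: ps_homog_iter_deriv_t0.
Qed.

Definition jet_factor (w r : ps) (s : seq nat) (v : nat) (a : ps) : ps :=
  ps_mul a (ps_pow (jet w r v) (nth 0%N s v)).

Definition mono_eval (w r : ps) (s : seq nat) : ps :=
  foldr (jet_factor w r s) (ps_const 1) (iota 0 (size s)).

Lemma dp_evalE w r P m :
  dp_eval w r P (mtrim m) = \sum_(x <- P) x.1 * mono_eval w r x.2 (mtrim m).
Proof.
elim: P => [|x P IH] /=; first by rewrite big_nil /ps_const; case: ifP.
by rewrite big_cons /ps_add /ps_scale !mtrimK IH addrC.
Qed.

Lemma ps_homog_mono_eval d w r s :
  ps_homog d (-2) w -> ps_homog d (-1) r -> ps_homog d (mwt s) (mono_eval w r s).
Proof.
move=> Hw Hr; rewrite /mono_eval /mwt /mlin /index_iota subn0.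
elim: (iota 0 (size s)) => [|v L IH] /=; first by rewrite big_nil; apply: ps_homog_const.
by rewrite big_cons addrC; apply: ps_homog_mul => //; apply/ps_homog_pow/ps_homog_jet.
Qed.

Lemma eq_foldr_jet_factor w r s1 s2 i1 i2 L m :
  (forall v, nth 0%N s1 v = nth 0%N s2 v) -> (forall m, i1 (mtrim m) = i2 (mtrim m)) ->
  foldr (jet_factor w r s1) i1 L (mtrim m) = foldr (jet_factor w r s2) i2 L (mtrim m).
Proof.
move=> Hs Hi; elim: L m => [|v L IH] m //=.
by rewrite /jet_factor /ps_mul Hs; apply: eq_bigr => a _; rewrite IH.
Qed.

Lemma foldr_jet_factor0 w r s L m : (forall v, v \in L -> nth 0%N s v = 0%N) ->
  foldr (jet_factor w r s) (ps_const 1) L (mtrim m) = ps_const 1 (mtrim m).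
Proof.
elim: L m => [|v L IH] m //= HL.
by rewrite /jet_factor HL ?mem_head //= ps_mulr1 IH // => u Hu; rewrite HL // inE Hu orbT.
Qed.

Lemma mono_eval_mtrim w r s m : mono_eval w r s (mtrim m) = mono_eval w r (mtrim s) (mtrim m).
Proof.
rewrite /mono_eval -(subnKC (size_mtrim s)) iotaD foldr_cat.
apply: eq_foldr_jet_factor => [v|m']; first by rewrite nth_mtrim.
by apply: foldr_jet_factor0 => v; rewrite mem_iota -nth_mtrim => /andP[Hv _]; apply: nth_default.
Qed.

Lemma dp_sum_coef (P : dpoly) (h : seq nat -> rat) : (forall s, h s = h (mtrim s)) ->
  \sum_(x <- P) x.1 * h x.2 = \sum_(u <- undup [seq mtrim x.2 | x <- P]) dp_coef P u * h u.
Proof.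
move=> Hh; set U := undup _.
have HU u : u \in U -> mtrim u = u by rewrite mem_undup => /mapP [x _ ->]; rewrite mtrimK.
transitivity (\sum_(u <- U) \sum_(x <- P) (if mtrim x.2 == mtrim u then x.1 * h x.2 else 0)).
  rewrite exchange_big /=; apply: eq_big_seq => x Px.
  have Ux : mtrim x.2 \in U by rewrite mem_undup; exact: map_f.
  rewrite (bigD1_seq _ Ux) ?undup_uniq //= mtrimK eqxx big1_seq ?addr0 // => u /andP[xu Uu].
  by rewrite (HU u Uu) eq_sym (negbTE xu).
apply: eq_big_seq => u Uu; rewrite /dp_coef mulr_suml [RHS]big_mkcond /=.
by apply: eq_bigr => x _; case: ifP => // /eqP E; rewrite Hh E -Hh.
Qed.

Lemma dp_sum_neq0 (P : dpoly) (h : seq nat -> rat) : (forall s, h s = h (mtrim s)) ->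
  \sum_(x <- P) x.1 * h x.2 != 0 -> exists u, dp_coef P u != 0 /\ h u != 0.
Proof.
move=> Hh; rewrite dp_sum_coef // => /sumr_neq0 [u _].
have [->|Pu] := eqVneq (dp_coef P u) 0; first by rewrite mul0r eqxx.
by have [->|hu] := eqVneq (h u) 0; [rewrite mulr0 eqxx | exists u].
Qed.

Lemma dp_coef_mtrim P m : dp_coef P (mtrim m) = dp_coef P m.
Proof. by rewrite /dp_coef mtrimK. Qed.

Lemma dp_coef_add P Q m : dp_coef (dp_add P Q) m = dp_coef P m + dp_coef Q m.
Proof. by rewrite /dp_coef /dp_add big_cat. Qed.

Lemma dp_coef_scale a P m : dp_coef (dp_scale a P) m = a * dp_coef P m.
Proof. by rewrite /dp_coef /dp_scale big_map mulr_sumr. Qed.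

Lemma mem_dp_coef P m : dp_coef P m != 0 -> mtrim m \in undup [seq mtrim x.2 | x <- P].
Proof.
rewrite /dp_coef big_mkcond => /sumr_neq0 [x Px]; case: ifP => [/eqP E _|]; last by rewrite eqxx.
by rewrite mem_undup -E; apply: map_f.
Qed.

Definition dp_homog (c : int) (P : dpoly) : Prop :=
  forall m, dp_coef P m != 0 -> mwt m = c.

(* Term-wise homogeneity ignores cancellations between terms; unlike [dp_homog]
   it is what survives multiplication on the left. *)
Definition dp_terms_homog (c : int) (P : dpoly) : Prop :=
  forall x, x \in P -> x.1 != 0 -> mwt x.2 = c.

Lemma dp_homog_eq c P Q : dp_eq P Q -> dp_homog c P -> dp_homog c Q.
Proof. by move=> E HP m; rewrite -E; apply: HP. Qed.

Lemma dp_homog_add c P Q : dp_homog c P -> dp_homog c Q -> dp_homog c (dp_add P Q).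
Proof.
move=> HP HQ m; rewrite dp_coef_add.
by have [->|/HP] := eqVneq (dp_coef P m) 0; [rewrite add0r; apply: HQ | ].
Qed.

Lemma dp_homog_scale c a P : dp_homog c P -> dp_homog c (dp_scale a P).
Proof.
move=> HP m; rewrite dp_coef_scale.
by have [->|/HP] := eqVneq (dp_coef P m) 0; [rewrite mulr0 eqxx | ].
Qed.

Lemma dp_homog_terms c P : dp_terms_homog c P -> dp_homog c P.
Proof.
move=> HP m; rewrite /dp_coef big_mkcond => /sumr_neq0 [x Px].
case: ifP => [/eqP E|]; last by rewrite eqxx.
by move/(HP x Px); rewrite -[mwt m]mwt_mtrim -E mwt_mtrim.
Qed.

Lemma dp_terms_homog_var i : dp_terms_homog (i%:Z - 3) (dp_var i).
Proof. by move=> x; rewrite inE => /eqP-> _; apply: mlin_mvar. Qed.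

Lemma dp_terms_homog_mul a b c P Q :
  dp_terms_homog a P -> dp_terms_homog b Q -> a + b = c -> dp_terms_homog c (dp_mul P Q).
Proof.
move=> HP HQ <- z /allpairsP [[x y] [Px Qy ->]] /= xy.
rewrite mwt_madd (HP x) ?(HQ y) //.
  by apply: contraNneq xy => ->; rewrite mulr0.
by apply: contraNneq xy => ->; rewrite mul0r.
Qed.

Lemma dp_homog_mul a b c A P :
  dp_terms_homog a A -> dp_homog b P -> a + b = c -> dp_homog c (dp_mul A P).
Proof.
move=> HA HP <- m; rewrite /dp_coef /dp_mul big_mkcond big_allpairs_dep /= => /sumr_neq0 [y Ay].
pose h s := if mtrim (madd y.2 s) == mtrim m then y.1 else 0.
have -> : \sum_(x <- P) (if mtrim (madd y.2 x.2) == mtrim m then y.1 * x.1 else 0)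
        = \sum_(x <- P) x.1 * h x.2.
  by apply: eq_bigr => x _; rewrite /h; case: ifP; rewrite ?mulr0 // mulrC.
case/dp_sum_neq0 => [s|u [Pu]].
  by rewrite /h (@eq_mtrim (madd y.2 (mtrim s)) (madd y.2 s)) // => i; rewrite !nth_madd nth_mtrim.
rewrite /h; case: ifP => [/eqP E yu|]; last by rewrite eqxx.
by rewrite -[mwt m]mwt_mtrim -E mwt_mtrim mwt_madd (HA y) // (HP u).
Qed.

(* The monomial of the term of [d_x s] that differentiates the jet variable [X_v]
   (cf. [dp_D_term]). *)
Definition mshift (s : seq nat) (v : nat) : seq nat :=
  incr_nth (set_nth 0%N s v (nth 0%N s v).-1) v.+2.

Lemma nth_mshift s v i : nth 0%N (mshift s v) i =
  ((v.+2 == i) + (if i == v then (nth 0%N s v).-1 else nth 0%N s i))%N.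
Proof. by rewrite /mshift nth_incr_nth nth_set_nth. Qed.

Lemma mwt_mshift s v : (0 < nth 0%N s v)%N -> mwt (mshift s v) = mwt s + 2.
Proof.
move=> Hv; rewrite /mwt /mshift mlin_incr_nth (@mlin_mdec _ _ s v) //.
rewrite (@eq_mlin _ _ _ (mdec s v)) => [|i]; last by rewrite nth_set_nth nth_mdec.
by rewrite -addrA; congr (_ + _); rewrite -addn2 PoszD; ring.
Qed.

Definition D_contrib (m s : seq nat) : rat :=
  \sum_(v <- iota 1 (size s)) (if mtrim (mshift s v) == mtrim m then (nth 0%N s v)%:R else 0).

Lemma dp_coef_D P m : dp_coef (dp_D P) m = \sum_(x <- P) x.1 * D_contrib m x.2.
Proof.
rewrite /dp_coef /dp_D big_flatten big_map; apply: eq_bigr => x _.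
rewrite /dp_D_term big_map /D_contrib mulr_sumr big_mkcond; apply: eq_bigr => v _ /=.
by case: ifP; rewrite ?mulr0 // mulrC.
Qed.

Lemma D_contrib_mtrim m s : D_contrib m s = D_contrib m (mtrim s).
Proof.
rewrite /D_contrib -(subnKC (size_mtrim s)) iotaD big_cat /= [X in _ + X]big1_seq.
  rewrite addr0; apply: eq_bigr => v _.
  by rewrite nth_mtrim (@eq_mtrim (mshift (mtrim s) v) (mshift s v)) // => i;
    rewrite !nth_mshift !nth_mtrim.
move=> v /andP[_]; rewrite mem_iota -nth_mtrim => /andP[Hv _].
by rewrite nth_default ?if_same //; apply: ltnW.
Qed.

Lemma dp_homog_D c P : dp_homog c P -> dp_homog (c + 2) (dp_D P).
Proof.
move=> HP m; rewrite dp_coef_D => /(dp_sum_neq0 (D_contrib_mtrim m)) [u [Pu]].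
case/sumr_neq0 => v _; case: ifP => [/eqP E|]; last by rewrite eqxx.
rewrite pnatr_eq0 -lt0n => Hv.
by rewrite -[mwt m]mwt_mtrim -E mwt_mtrim mwt_mshift // (HP u).
Qed.

Lemma ps_homog_dp_eval d c w r P :
  ps_homog d (-2) w -> ps_homog d (-1) r -> dp_homog c P -> ps_homog d c (dp_eval w r P).
Proof.
move=> Hw Hr HP m Hm; rewrite dp_evalE.
case/(dp_sum_neq0 (fun s => mono_eval_mtrim w r s m)) => u [Pu Hu].
by rewrite -(HP _ Pu); apply: (ps_homog_mono_eval Hw Hr).
Qed.

Lemma seq_argmax (T : eqType) (s : seq T) (f : T -> nat) x :
  x \in s -> exists2 y, y \in s & forall z, z \in s -> (f z <= f y)%N.
Proof.
elim: s x => [|a s IH] // x _; case: s IH => [|b s] IH.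
  by exists a; rewrite ?mem_head // => z; rewrite inE => /eqP->.
have [y sy ymax] := IH b (mem_head _ _).
have [fay|fya] := leqP (f a) (f y).
  by exists y => [|z]; rewrite in_cons ?sy ?orbT // => /orP[/eqP->|/ymax].
exists a => [|z]; rewrite ?mem_head // in_cons => /orP[/eqP->//|/ymax/leq_trans]; apply.
exact: ltnW.
Qed.

(* The variable [X_(V+2)], with [V] the last index of [u], lies beyond every
   monomial [s] no longer than [u], so in [mshift s v] it can only come from [v = V]. *)
Lemma mshift_last_inj u s v : (size s <= size u)%N -> (0 < nth 0%N s v)%N ->
  (0 < nth 0%N u (size u).-1)%N -> mtrim (mshift s v) = mtrim (mshift u (size u).-1) ->
  v = (size u).-1 /\ mtrim s = mtrim u.
Proof.
move=> su sv uV /mtrim_eqP E.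
have szu : size u = (size u).-1.+1 by case: u uV {su E}.
set V := (size u).-1 in uV E szu *.
have s0 i : (size u <= i)%N -> nth 0%N s i = 0%N.
  by move=> ui; apply: nth_default; apply: leq_trans ui.
have VV : (V.+2 == V) = false by rewrite gtn_eqF.
have EV := E V.+2; rewrite !nth_mshift eqxx VV [nth _ u _]nth_default ?szu // in EV.
have vV : v = V.
  move: EV; have [Vv|_] := eqVneq V.+2 v; first by rewrite -Vv s0 ?szu ?leqnSn in sv.
  by rewrite s0 ?szu ?leqnSn //; case: eqP => [[]|].
subst v; split=> //; apply: eq_mtrim => i; move: (E i); rewrite !nth_mshift.
have [->|_] := eqVneq i V; last by move/eqP; rewrite eqn_add2l => /eqP.
by rewrite VV !add0n => EV'; rewrite -(prednK sv) -(prednK uV) EV'.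
Qed.

Lemma dp_coef_D_mshift_last P u : mtrim u = u -> dp_coef P u != 0 ->
  (0 < (size u).-1)%N -> (0 < nth 0%N u (size u).-1)%N ->
  (forall u', dp_coef P u' != 0 -> mwt u' = mwt u -> (size (mtrim u') <= size u)%N) ->
  dp_coef (dp_D P) (mshift u (size u).-1) = dp_coef P u * (nth 0%N u (size u).-1)%:R.
Proof.
set V := (size u).-1; set t := mshift u V => uK Pu V_pos uV umax.
have hit s v : (size s <= size u)%N -> (0 < nth 0%N s v)%N -> mtrim (mshift s v) = mtrim t ->
    v = V /\ mtrim s = u.
  by move=> su sv /(mshift_last_inj su sv uV) [-> ->].
have Uu := mem_dp_coef Pu; rewrite uK in Uu.
rewrite dp_coef_D (dp_sum_coef _ (D_contrib_mtrim t)) (bigD1_seq u) ?undup_uniq //=.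
rewrite big1_seq ?addr0; last first.
  move=> u2 /andP[u2u]; rewrite mem_undup => /mapP[x _ u2E].
  have u2T : mtrim u2 = u2 by rewrite u2E mtrimK.
  have [->|Pu2] := eqVneq (dp_coef P u2) 0; first by rewrite mul0r.
  rewrite /D_contrib big1_seq ?mulr0 // => v /andP[_ _]; case: ifP => // /eqP Et.
  have [->|u2v] := posnP (nth 0%N u2 v); first by [].
  have wt_u2 : mwt u2 = mwt u.
    by apply: (@addIr _ 2); rewrite -(mwt_mshift u2v) -(mwt_mshift uV) -mwt_mtrim Et mwt_mtrim.
  have su2 := umax _ Pu2 wt_u2; rewrite u2T in su2.
  by have [_ u2K] := hit _ _ su2 u2v Et; case/eqP: u2u; rewrite -u2K u2T.
congr (_ * _); rewrite /D_contrib (bigD1_seq V) ?iota_uniq //=; last first.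
  by rewrite mem_iota V_pos add1n ltnS leq_pred.
rewrite eqxx big1_seq ?addr0 // => v /andP[vV _]; case: ifP => // /eqP Et.
have [->|uv] := posnP (nth 0%N u v); first by [].
by have [vV' _] := hit _ _ (leqnn _) uv Et; rewrite vV' eqxx in vV.
Qed.

(* [d_x] kills only the constants [Q[eps]]: a monomial of [P] of maximal size
   and wrong weight survives in [d_x P] through its last jet variable. *)
Lemma dp_homog_of_D c P : dp_homog (c + 2) (dp_D P) ->
  (forall m, (forall v, (0 < v)%N -> nth 0%N m v = 0%N) -> dp_coef P m = 0) ->
  dp_homog c P.
Proof.
move=> HD Hpure m Pm; apply/eqP/contraT => wt_m.
pose bad u := (dp_coef P u != 0) && (mwt u != c).
have mU : mtrim m \in filter bad (undup [seq mtrim x.2 | x <- P]).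
  by rewrite mem_filter /bad dp_coef_mtrim Pm mwt_mtrim wt_m mem_dp_coef.
have [u] := seq_argmax size mU; rewrite mem_filter => /andP[/andP[Pu wt_u] Uu] umax.
have uK : mtrim u = u by move: Uu; rewrite mem_undup => /mapP[x _ ->]; rewrite mtrimK.
have [[v v_pos uv]|u0] := exists_pos_nth u 1; last by rewrite Hpure ?eqxx in Pu.
have vu : (v < size u)%N by rewrite ltnNge; apply: contraTN uv => /(nth_default 0%N)->.
have uV : (0 < nth 0%N u (size u).-1)%N.
  by rewrite -uK nth_last_mtrim // uK; apply: contraTneq vu => ->.
have V_pos : (0 < (size u).-1)%N by rewrite -ltnS prednK ?(leq_ltn_trans _ vu) // (leq_trans v_pos).
have Dnz : dp_coef (dp_D P) (mshift u (size u).-1) != 0.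
  rewrite dp_coef_D_mshift_last // ?mulf_neq0 ?pnatr_eq0 -?lt0n // => u' Pu' wt_u'.
  by apply: umax; rewrite mem_filter /bad dp_coef_mtrim Pu' mwt_mtrim wt_u' wt_u mem_dp_coef.
by move: wt_u; rewrite -(inj_eq (addIr 2)) -(mwt_mshift uV) (HD _ Dnz) eqxx.
Qed.

Lemma dp_terms_homog_w : dp_terms_homog (-2) dp_w. Proof. exact: dp_terms_homog_var. Qed.
Lemma dp_terms_homog_wx : dp_terms_homog 0 dp_wx. Proof. exact: dp_terms_homog_var. Qed.
Lemma dp_terms_homog_rho : dp_terms_homog (-1) dp_rho. Proof. exact: dp_terms_homog_var. Qed.
Lemma dp_terms_homog_rhox : dp_terms_homog 1 dp_rhox. Proof. exact: dp_terms_homog_var. Qed.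
Lemma dp_terms_homog_eps : dp_terms_homog (-3) dp_eps. Proof. exact: dp_terms_homog_var. Qed.

Lemma dp_terms_homog_rho2 : dp_terms_homog (-2) (dp_mul dp_rho dp_rho).
Proof. exact: dp_terms_homog_mul dp_terms_homog_rho dp_terms_homog_rho _. Qed.

Lemma dp_terms_homog_eps2 : dp_terms_homog (-6) (dp_mul dp_eps dp_eps).
Proof. exact: dp_terms_homog_mul dp_terms_homog_eps dp_terms_homog_eps _. Qed.

Lemma dp_homog_L c f : dp_homog c f -> dp_homog (c - 2) (dp_L f).
Proof.
move=> Hf; have HDf := dp_homog_D Hf; have HDDf := dp_homog_D HDf.
apply: dp_homog_add; first by apply: (dp_homog_mul dp_terms_homog_w Hf); ring.
apply: dp_homog_add.
  by apply/dp_homog_scale/(dp_homog_mul dp_terms_homog_rho2 Hf); ring.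
apply: dp_homog_add.
  apply/dp_homog_scale/(dp_homog_mul dp_terms_homog_eps).
    exact: dp_homog_mul dp_terms_homog_rhox Hf (erefl _).
  by ring.
apply: dp_homog_add.
  apply: (dp_homog_mul dp_terms_homog_eps).
    exact: dp_homog_mul dp_terms_homog_rho HDf (erefl _).
  by ring.
by apply/dp_homog_scale/(dp_homog_mul dp_terms_homog_eps2 HDDf); ring.
Qed.

Lemma dp_homog_KdVop c f : dp_homog c f -> dp_homog c (dp_KdVop f).
Proof.
move=> Hf; have HDf := dp_homog_D Hf; have HD3f := dp_homog_D (dp_homog_D HDf).
apply: dp_homog_add; first by apply: (dp_homog_mul dp_terms_homog_w HDf); ring.
apply: dp_homog_add; first by apply/dp_homog_scale/(dp_homog_mul dp_terms_homog_wx Hf); ring.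
by apply/dp_homog_scale/(dp_homog_mul dp_terms_homog_eps2 HD3f); ring.
Qed.

Lemma dp_homog_K K n : KdV_family K -> dp_homog (- 2 * n%:Z - 2) (K n).
Proof.
case=> [K0 [KS Kpure]]; elim: n => [|n IH].
  by apply: (dp_homog_eq (P := dp_w)) (dp_homog_terms dp_terms_homog_w) => m; rewrite K0.
apply: dp_homog_of_D (Kpure n.+1).
have -> : - 2 * n.+1%:Z - 2 + 2 = - 2 * n%:Z - 2 by rewrite intS; ring.
apply: (dp_homog_eq (P := dp_scale _ (dp_KdVop (K n)))).
  by move=> m; rewrite KS.
exact: dp_homog_scale (dp_homog_KdVop IH).
Qed.

Lemma dp_homog_R K n : KdV_family K -> dp_homog (- 2 * n%:Z - 1) (dp_R K n).
Proof.
move=> HK; elim: n => [|n IH]; first exact: dp_homog_terms dp_terms_homog_rho.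
have HKn : dp_homog _ (K n) := dp_homog_K HK.
have -> : - 2 * n.+1%:Z - 1 = - 2 * n%:Z - 1 - 2 by rewrite intS; ring.
apply/dp_homog_scale/dp_homog_add; first exact: dp_homog_L.
apply: dp_homog_add; first by apply/dp_homog_scale/(dp_homog_mul dp_terms_homog_rho HKn); ring.
by apply/dp_homog_scale/(dp_homog_mul dp_terms_homog_eps (dp_homog_D HKn)); ring.
Qed.

Lemma dp_homog_Q n : dp_homog (- 2 * n%:Z - 2) (dp_Q n).
Proof.
elim: n => [|n IH].
  apply: dp_homog_add; first exact: dp_homog_terms dp_terms_homog_w.
  apply: dp_homog_add; first exact/dp_homog_scale/dp_homog_terms/dp_terms_homog_rho2.
  exact/dp_homog_scale/dp_homog_terms/(dp_terms_homog_mul dp_terms_homog_eps dp_terms_homog_rhox).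
have -> : - 2 * n.+1%:Z - 2 = - 2 * n%:Z - 2 - 2 by rewrite intS; ring.
exact/dp_homog_scale/dp_homog_L.
Qed.

Lemma ps_deriv_mdec j f m : (0 < nth 0%N m j)%N ->
  ps_deriv j f (mtrim (mdec m j)) = (nth 0%N m j)%:R * f (mtrim m).
Proof.
by move=> mj; rewrite /ps_deriv mtrimK mtrim_incr_mdec // nth_mtrim nth_mdec eqxx prednK.
Qed.

Lemma mwt_antideriv j f g c m : ps_eq (ps_deriv j f) g ->
  (0 < nth 0%N m j)%N -> f (mtrim m) != 0 ->
  (g (mtrim (mdec m j)) != 0 -> mwt (mdec m j) = c) -> mwt m = c + (j%:Z - 3).
Proof.
move=> E mj fm Hg; rewrite (mwt_mdec mj) Hg // -E ps_deriv_mdec //.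
by rewrite mulf_neq0 // pnatr_eq0 -lt0n.
Qed.

Section TopologicalSolution.
Variables (K : nat -> dpoly) (w r G : ps).
Hypotheses (HK : KdV_family K) (HT : open_topological K w r G).

Lemma homog_wr_deg0 m : mdeg m = 0%N ->
  (w (mtrim m) != 0 -> mwt m = -2) /\ (r (mtrim m) != 0 -> mwt m = -1).
Proof.
have [_ [_ [_ [_ [init _]]]]] := HT; move/mdeg_eq0 => m0.
have [-> ->] : w (mtrim m) = ps_var (vt 0) (mtrim m) /\ r (mtrim m) = 0.
  by apply: init => -[|[|v]] // _ _; apply: m0.
by rewrite eqxx; split=> // Hv; exact: ps_homog_var (leqnn _) Hv.
Qed.

(* Differentiating in a variable [t_k] or [s_k] of [m] lowers [mdeg]; the flow
   equations express that derivative through [K_k], [R_k], [Q_k] evaluated at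
   [(w, rho)], whose weights the induction hypothesis controls. *)
Lemma homog_wr_step d m j : ps_homog d (-2) w -> ps_homog d (-1) r ->
  (2 <= j)%N -> (0 < nth 0%N m j)%N -> (mdeg m <= d.+1)%N ->
  (w (mtrim m) != 0 -> mwt m = -2) /\ (r (mtrim m) != 0 -> mwt m = -1).
Proof.
have [Hwt [Hrt [Hws [Hrs _]]]] := HT; move=> Hw Hr j2 mj.
rewrite (mdeg_mdec j2 mj) ltnS => Hm.
have eval_homog c P : dp_homog c P -> ps_homog d (c + 2) (ps_deriv (vt 0) (dp_eval w r P)).
  by move=> HP; exact: ps_homog_deriv_t0 (ps_homog_dp_eval Hw Hr HP).
case: (var_cases j) j2 mj Hm => [->//|[[k ->]|[k ->]]] _ mj Hm.
- split=> Hm0.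
  + rewrite (mwt_antideriv (Hwt k) mj Hm0 (eval_homog _ _ (dp_homog_K HK) _ Hm)).
    by rewrite vt_weight; ring.
  + rewrite (mwt_antideriv (Hrt k) mj Hm0 (eval_homog _ _ (dp_homog_R HK) _ Hm)).
    by rewrite vt_weight; ring.
- split=> Hm0.
  + have := ps_deriv_mdec w mj; rewrite (Hws k) /ps_const if_same => /esym/eqP.
    by rewrite mulf_eq0 pnatr_eq0 (negbTE Hm0) orbF (gtn_eqF mj).
  + rewrite (mwt_antideriv (Hrs k) mj Hm0 (eval_homog _ _ (@dp_homog_Q k) _ Hm)).
    by rewrite vs_weight; ring.
Qed.

Lemma homog_wr d : ps_homog d (-2) w /\ ps_homog d (-1) r.
Proof.
suff Hd m : (mdeg m <= d)%N ->
    (w (mtrim m) != 0 -> mwt m = -2) /\ (r (mtrim m) != 0 -> mwt m = -1).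
  by split=> m /(Hd m)[].
elim: d m => [|d IH] m Hm; first by apply: homog_wr_deg0; apply/eqP; rewrite -leqn0.
have Hw : ps_homog d (-2) w by move=> m' /(IH m')[].
have Hr : ps_homog d (-1) r by move=> m' /(IH m')[].
have [m0|/mdeg_neq0 [j j2 mj]] := eqVneq (mdeg m) 0%N; first exact: homog_wr_deg0.
exact: homog_wr_step Hw Hr j2 mj Hm.
Qed.

Lemma homog_dp_eval c P m : dp_homog c P -> dp_eval w r P (mtrim m) != 0 -> mwt m = c.
Proof.
by have [Hw Hr] := homog_wr (mdeg m); move/(ps_homog_dp_eval Hw Hr)/(_ m (leqnn _)).
Qed.

(* Every [t]- or [s]-derivative of [G] is an [R_n] or a [Q_n]; the pure powers of
   [eps] in [G] vanish by the normalisation. *)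
Lemma homog_G m : G (mtrim m) != 0 -> mwt m = -3.
Proof.
have [_ [_ [_ [_ [_ [HGt [HGs HG0]]]]]]] := HT; move=> Gm.
have [[j j1 mj]|m0] := exists_pos_nth m 1; last first.
  have mE : mtrim m = mtrim [:: nth 0%N m 0] by apply: eq_mtrim => -[|i] //=; rewrite nth_nil m0.
  by rewrite mE HG0 eqxx in Gm.
case: (var_cases j) j1 mj => [->//|[[k ->]|[k ->]]] _ mj.
- rewrite (mwt_antideriv (HGt k) mj Gm (homog_dp_eval (dp_homog_R HK))).
  by rewrite vt_weight; ring.
- rewrite (mwt_antideriv (HGs k) mj Gm (homog_dp_eval (@dp_homog_Q k))).
  by rewrite vs_weight; ring.
Qed.

End TopologicalSolution.

Definition incrs (js s : seq nat) : seq nat := foldr (fun j s => incr_nth s j) s js.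

Lemma nth_incrs js s i : nth 0%N (incrs js s) i = (nth 0%N s i + count_mem i js)%N.
Proof. by elim: js => [|j js IH] /=; rewrite ?addn0 // nth_incr_nth IH addnCA addnA. Qed.

Lemma mwt_incrs js s : mwt (incrs js s) = mwt s + \sum_(j <- js) (j%:Z - 3).
Proof.
elim: js => [|j js IH] /=; first by rewrite big_nil addr0.
by rewrite mwt_incr_nth IH big_cons; ring.
Qed.

Lemma coef_foldr_ps_deriv f js m : exists a : rat,
  foldr ps_deriv f js (mtrim m) = a * f (mtrim (incrs js m)).
Proof.
elim: js m => [|j js IH] m /=; first by exists 1; rewrite mul1r.
rewrite /ps_deriv; have [a ->] := IH (incr_nth (mtrim (mtrim m)) j).
exists ((nth 0%N (mtrim m) j).+1%:R * a); rewrite mtrimK mulrA; congr (_ * f _).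
by apply: eq_mtrim => i; rewrite !nth_incrs !nth_incr_nth !nth_mtrim nth_incrs addnA.
Qed.

Lemma open_corr_coef G p ks ls : exists a : rat,
  open_corr G p ks ls = a * G (mtrim (incrs (map vt ks ++ map vs ls) [:: p])).
Proof.
rewrite /open_corr -(foldr_map vt ps_deriv) -(foldr_map vs ps_deriv) -foldr_cat.
set js := _ ++ _; have [a E] := coef_foldr_ps_deriv (Fo G p) js [::].
have js0 : count_mem 0%N js = 0%N.
  by apply/count_memPn; rewrite mem_cat; apply/norP; split; apply/mapP => -[k _];
    rewrite ?vt_double ?vs_double.
exists a; rewrite -[[::]]/(mtrim [::]) E /Fo nth_mtrim nth_incrs js0 eqxx; congr (_ * G _).
apply: eq_mtrim => -[|i]; rewrite nth_set_nth /= ?nth_mtrim !nth_incrs ?js0 ?addn0 //.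
by rewrite -[nth _ [:: p] _]/(nth 0%N [::] i) !nth_nil.
Qed.

Lemma sum_affine (ks : seq nat) (a : int) :
  \sum_(k <- ks) (2 * k%:Z + a) = 2 * (\sum_(k <- ks) k)%N%:Z + a * (size ks)%:Z.
Proof. by elim: ks => [|k ks IH]; rewrite ?big_nil ?mulr0 // !big_cons IH PoszD intS; ring. Qed.

Lemma mwt_eps p : mwt [:: p] = - 3 * p%:Z.
Proof. by rewrite /mwt /mlin big_nat1 -mulr_natr natz; ring. Qed.

Lemma mwt_corr p ks ls : mwt (incrs (map vt ks ++ map vs ls) [:: p]) =
  2 * (\sum_(k <- ks) k)%N%:Z + 2 * (\sum_(l <- ls) l)%N%:Z
  - 2 * (size ks)%:Z - (size ls)%:Z - 3 * p%:Z.
Proof.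
rewrite mwt_incrs mwt_eps big_cat !big_map (eq_bigr _ (fun k _ => vt_weight k)).
by rewrite (eq_bigr _ (fun l _ => vs_weight l)) !sum_affine /=; ring.
Qed.

Theorem mainTheorem6 (K : nat -> dpoly) (w r G : ps) :
  KdV_family K -> open_topological K w r G ->
  forall (p : nat) (ks ls : seq nat),
    (1 <= size ks + size ls)%N ->
    (\sum_(k <- ks) k)%:R + (\sum_(l <- ls) l)%:R - (size ks)%:R - (size ls)%:R / 2
      != 3 / 2 * (p%:R - 1) :> rat ->
    open_corr G p ks ls = 0.
Proof.
move=> HK HT p ks ls _ Hne; have [a ->] := open_corr_coef G p ks ls.
have [->|/(homog_G HK HT)] := eqVneq (G (mtrim (incrs (map vt ks ++ map vs ls) [:: p]))) 0.
  by rewrite mulr0.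
rewrite mwt_corr => Hwt; case/eqP: Hne.
set A := (\sum_(k <- ks) k)%N in Hwt *; set B := (\sum_(l <- ls) l)%N in Hwt *.
have En : (A.*2 + B.*2 + 3 = (size ks).*2 + size ls + 3 * p)%N by lia.
have := congr1 (fun n : nat => n%:R : rat) En; rewrite !natrD -!muln2 !natrM.
by move=> E; lra.
Qed.
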